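(* In the setting of the context, with $V(\mathbf{x})=\sum_{\mathbf{n}=\mathbf{x}}^{\boldsymbol{\ell}}\mathscr{C}_{\mathbf{n},\mathbf{x}}V^{\mathbf{n}}$ where $\mathscr{C}_{\mathbf{n},\mathbf{x}}=\frac{(-1)^{|\mathbf{n}|-|\mathbf{x}|}}{(2|\mathbf{x}|+\omega+1)_{|\mathbf{n}|-|\mathbf{x}|}}\prod_{p=1}^N\binom{n_p}{x_p}(|\mathbf{n}|_1^{p-1}+|\mathbf{x}|_1^{p}+|\boldsymbol{\ell}|_p^N+a_p+\omega+1)_{n_p-x_p}$, the inverse change of basis is: for every $\mathbf{n}$ with $0\le n_p\le\ell_p$, \[ V^{\mathbf{n}}=\sum_{\mathbf{x}=\mathbf{n}}^{\boldsymbol{\ell}}\overline{\mathscr{C}}_{\mathbf{x},\mathbf{n}}V(\mathbf{x}),\qquad \overline{\mathscr{C}}_{\mathbf{x},\mathbf{n}}=\frac{1}{(|\mathbf{n}|+|\mathbf{x}|+\omega)_{|\mathbf{x}|-|\mathbf{n}|}}\prod_{p=1}^N\binom{x_p}{n_p}\big(|\mathbf{n}|_1^{p}+|\mathbf{x}|_1^{p-1}+|\boldsymbol{\ell}|_p^N+a_p+\omega+1\big)_{x_p-n_p}. \]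
   Context: Notation: for $N$-tuples of integers, $|\mathbf{n}|_j^k=\sum_{p=j}^k n_p$ (equal to $0$ if $j>k$), $|\mathbf{n}|=|\mathbf{n}|_1^N$; $(x)_k=x(x+1)\cdots(x+k-1)$, $(x)_0=1$. A sum $\sum_{\mathbf{n}=\mathbf{a}}^{\mathbf{b}}$ means the sum over all $\mathbf{n}$ with $a_p\le n_p\le b_p$ for every $p$. Setting: $N\ge1$, $\boldsymbol{\ell}=(\ell_1,\dots,\ell_N)$ nonnegative integers, $\mathcal{V}=\mathbb{C}^{\ell_1+1}\otimes\cdots\otimes\mathbb{C}^{\ell_N+1}$ with basis $V^{\mathbf{n}}$, $0\le n_p\le\ell_p$. Scalars $\theta_0,\theta_0^\star,h,h^\star,\omega,\omega^\star,a_1,\dots,a_N\in\mathbb{C}$ satisfy the standing constraints: $h,h^\star\neq0$; $\omega,\omega^\star\notin\{-2|\boldsymbol{\ell}|+1,\dots,-1\}$; for each $i$, none of $a_i,\ a_i+\omega-\omega^\star,\ a_i-|\boldsymbol{\ell}|-\omega^\star,\ a_i+|\boldsymbol{\ell}|+\omega$ lies in $\{-\ell_i,\dots,-1\}$; and with $S^\pm(\ell,a)=\{\pm(a+k+\tfrac12(\omega-\omega^\star)):k=1,\dots,\ell\}$, for all $i,j$ and signs, $S^{\epsilon_i}(\ell_i,a_i)$ and $S^{\epsilon_j}(\ell_j,a_j)$ are in general position (one contains the other or their union is not a string). *)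

From HB Require Import structures.
From mathcomp Require Import all_boot all_order all_algebra.
From mathcomp Require Import reals.
From mathcomp Require Import complex.
Set Implicit Arguments. Unset Strict Implicit. Unset Printing Implicit Defensive.
Import Order.TTheory GRing.Theory Num.Theory.
Local Open Scope ring_scope.

Definition poch (F : pzRingType) (x : F) (k : nat) : F :=
  \prod_(j < k) (x + j%:R).

(* Multi-indices n = (n_1,...,n_N), encoded as finite functions 'I_N -> 'I_(L.+1)
   with L = |l|; coordinate p (1-indexed in the paper) is index p-1 here. *)
Definition tot (N : nat) (l : 'I_N -> nat) : nat := \sum_(p < N) l p.
Definition mindex (N : nat) (l : 'I_N -> nat) := {ffun 'I_N -> 'I_(tot l).+1}.

(* |n|_{i+1}^{k} style partial sums, with 0-indexed coordinates:
   psum_lt n i = |n|_1^{p-1}, psum_le n i = |n|_1^{p}, psum_ge n i = |n|_p^N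
   where p = i+1. *)
Definition psum_lt (N : nat) (n : 'I_N -> nat) (i : 'I_N) : nat :=
  \sum_(q < N | (q < i)%N) n q.
Definition psum_le (N : nat) (n : 'I_N -> nat) (i : 'I_N) : nat :=
  \sum_(q < N | (q <= i)%N) n q.
Definition psum_ge (N : nat) (n : 'I_N -> nat) (i : 'I_N) : nat :=
  \sum_(q < N | (i <= q)%N) n q.
Definition msize (N : nat) (n : 'I_N -> nat) : nat := \sum_(q < N) n q.

Definition mi (N : nat) (l : 'I_N -> nat) (n : mindex l) : 'I_N -> nat :=
  fun p => nat_of_ord (n p).

Definition inbox (N : nat) (l : 'I_N -> nat) (x n : mindex l) : bool :=
  [forall p, (mi x p <= mi n p <= l p)%N].

(* The vector space V = C^{l_1+1} (x) ... (x) C^{l_N+1}, realized as coordinate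
   functions on multi-indices; the basis vector V^n is the indicator of n.
   (Coordinates at multi-indices outside the box 0 <= n <= l are never used:
   all vectors considered below vanish there.) *)
Definition basisV (R : realType) (N : nat) (l : 'I_N -> nat) (n : mindex l)
  : {ffun mindex l -> R[i]} := [ffun m => (m == n)%:R].

Arguments basisV {R N l} n.

Definition coefC (R : realType) (N : nat) (l : 'I_N -> nat) (a : 'I_N -> R[i])
    (om : R[i]) (n x : mindex l) : R[i] :=
  (-1) ^+ (msize (mi n) - msize (mi x))
  / poch ((2 * msize (mi x))%:R + om + 1) (msize (mi n) - msize (mi x))
  * \prod_(p < N)
      ('C(mi n p, mi x p)%:R
       * poch ((psum_lt (mi n) p + psum_le (mi x) p + psum_ge l p)%:R
               + a p + om + 1) (mi n p - mi x p)).

Definition coefCbar (R : realType) (N : nat) (l : 'I_N -> nat) (a : 'I_N -> R[i])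
    (om : R[i]) (x n : mindex l) : R[i] :=
  1 / poch ((msize (mi n) + msize (mi x))%:R + om) (msize (mi x) - msize (mi n))
  * \prod_(p < N)
      ('C(mi x p, mi n p)%:R
       * poch ((psum_le (mi n) p + psum_lt (mi x) p + psum_ge l p)%:R
               + a p + om + 1) (mi x p - mi n p)).

Definition Vx (R : realType) (N : nat) (l : 'I_N -> nat) (a : 'I_N -> R[i])
    (om : R[i]) (x : mindex l) : {ffun mindex l -> R[i]} :=
  \sum_(n : mindex l | inbox x n) coefC a om n x *: basisV n.

Definition mzero (N : nat) (l : 'I_N -> nat) : mindex l := [ffun _ => ord0].

Definition in_neg_range (F : pzRingType) (z : F) (m : nat) : Prop :=
  exists2 k : nat, (1 <= k <= m)%N & z = - k%:R.

Definition Sset (R : realType) (plus : bool) (lp : nat) (ap d : R[i]) : R[i] -> Prop :=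
  fun z => exists2 k : nat, (1 <= k <= lp)%N &
    z = (if plus then 1 else -1) * (ap + k%:R + d).

Definition is_string (F : pzRingType) (S : F -> Prop) : Prop :=
  exists (c : F) (m : nat), forall z, S z <-> exists2 k : nat, (k <= m)%N & z = c + k%:R.

Definition gen_pos (F : pzRingType) (S T : F -> Prop) : Prop :=
  (forall z, S z -> T z) \/ (forall z, T z -> S z) \/
  ~ is_string (fun z => S z \/ T z).

Definition standing (R : realType) (N : nat) (l : 'I_N -> nat)
    (th0 th0s h hs om oms : R[i]) (a : 'I_N -> R[i]) : Prop :=
  (1 <= N)%N /\ h != 0 /\ hs != 0 /\
      ~ in_neg_range om (2 * tot l).-1 /\ ~ in_neg_range oms (2 * tot l).-1 /\
      (forall i : 'I_N,
         [/\ ~ in_neg_range (a i) (l i),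
             ~ in_neg_range (a i + om - oms) (l i),
             ~ in_neg_range (a i - (tot l)%:R - oms) (l i) &
             ~ in_neg_range (a i + (tot l)%:R + om) (l i)]) /\
      (forall (i j : 'I_N) (ei ej : bool),
         gen_pos (Sset ei (l i) (a i) ((om - oms) / 2))
                 (Sset ej (l j) (a j) ((om - oms) / 2))).

(* Since V(x) = sum_{m >= x} C_{m,x} V^m, the claim says that the triangular arrays C
   and Cbar are inverse to each other, and it suffices to show Cbar C = 1, a left
   inverse of a square matrix being a right inverse.  For n <= m with M = |m| - |n| > 0,
   Cbar_{m,x} C_{x,n} is a constant times prod_p w_p(x) times a polynomial of degree
   M - 1 in |x| - |n|, where w_p depends only on x_p and on the partial sum of x - n
   over the earlier coordinates.  Summing out x_N, ..., x_1 in turn, each sum is an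
   operator of Chu-Vandermonde type for which the Pochhammer symbols (X + g)_k are
   eigenfunctions with eigenvalue (D - k)_(m_p - n_p); hence it maps polynomials of
   degree < D + m_p - n_p to polynomials of degree < D.  After N steps the degree
   bound is 0 and the sum vanishes. *)

From Pilot Require Import Defs.
From HB Require Import structures.
From mathcomp Require Import all_boot all_order all_algebra.
From mathcomp Require Import reals complex.
From mathcomp Require Import ring zify.
Import Order.TTheory GRing.Theory Num.Theory.
Local Open Scope ring_scope.

Section Pochhammer.
Context {F : comPzRingType}.
Implicit Types (x a b : F).

Lemma poch0 x : poch x 0 = 1.
Proof. by rewrite /poch big_ord0. Qed.

Lemma pochS x k : poch x k.+1 = poch x k * (x + k%:R).
Proof. by rewrite /poch big_ord_recr. Qed.

Lemma pochSl x k : poch x k.+1 = x * poch (x + 1) k.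
Proof.
rewrite /poch big_ord_recl addr0; congr (_ * _); apply: eq_bigr => j _.
by rewrite lift0 -addn1 natrD; ring.
Qed.

Lemma pochD x i j : poch x (i + j) = poch x i * poch (x + i%:R) j.
Proof.
rewrite /poch big_split_ord; congr (_ * _); apply: eq_bigr => k _.
by rewrite natrD addrA.
Qed.

Lemma poch_eq0 x k j : (j < k)%N -> x + j%:R = 0 -> poch x k = 0.
Proof. by move=> jk xj0; rewrite /poch (bigD1 (Ordinal jk)) //= xj0 mul0r. Qed.

Lemma sum_binS (f : nat -> F) M :
  \sum_(i < M.+2) 'C(M.+1, i)%:R * f i
  = \sum_(i < M.+1) 'C(M, i)%:R * f i + \sum_(i < M.+1) 'C(M, i)%:R * f i.+1.
Proof.
have drop_last : \sum_(i < M.+1) 'C(M, i.+1)%:R * f i.+1 = \sum_(i < M) 'C(M, i.+1)%:R * f i.+1.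
  by rewrite big_ord_recr /= bin_small // mul0r addr0.
rewrite big_ord_recl [X in _ = X + _]big_ord_recl -drop_last !bin0 -addrA -big_split /=.
congr (_ + _); apply: eq_bigr => i _.
by rewrite /bump add1n binS natrD mulrDl.
Qed.

Lemma chu_vandermonde M a b :
  \sum_(y < M.+1) 'C(M, y)%:R * ((-1) ^+ y * poch a y * poch (b + y%:R) (M - y))
  = poch (b - a) M.
Proof.
elim: M a b => [|M IH] a b; first by rewrite big_ord1 !poch0 bin0 !mulr1.
rewrite (sum_binS (fun y => (-1) ^+ y * poch a y * poch (b + y%:R) (M.+1 - y))) pochS.
have -> : \sum_(y < M.+1) 'C(M, y)%:R * ((-1) ^+ y * poch a y * poch (b + y%:R) (M.+1 - y))
    = (b + M%:R) * poch (b - a) M.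
  rewrite -IH mulr_sumr; apply: eq_bigr => y _.
  have yM : (y <= M)%N by rewrite -ltnS.
  by rewrite subSn // pochS -addrA -natrD subnKC //; ring.
have -> : \sum_(y < M.+1) 'C(M, y)%:R
      * ((-1) ^+ y.+1 * poch a y.+1 * poch (b + y.+1%:R) (M.+1 - y.+1))
    = - a * poch (b - a) M.
  rewrite (_ : b - a = b + 1 - (a + 1)); last by ring.
  rewrite -IH mulr_sumr; apply: eq_bigr => y _.
  by rewrite pochSl exprS subSS -nat1r addrA; ring.
ring.
Qed.

End Pochhammer.

Section VandermondeOperator.
Context {F : comPzRingType}.

Definition vdm_kernel (M D : nat) (g u : F) (y : nat) : F :=
  'C(M, y)%:R * ((-1) ^+ y * poch (u + g) y * poch (u + y%:R + D%:R + g) (M - y)).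

Definition vdm_op (M D : nat) (g : F) (f : F -> F) (u : F) : F :=
  \sum_(y < M.+1) vdm_kernel M D g u y * f (u + y%:R).

Lemma vdm_op_poch M D g k u :
  vdm_op M D g (fun v => poch (v + g) k) u = poch (D%:R - k%:R) M * poch (u + g) k.
Proof.
rewrite (_ : D%:R - k%:R = u + g + D%:R - (u + g + k%:R)); last by ring.
rewrite -chu_vandermonde mulr_suml; apply: eq_bigr => y _.
rewrite /vdm_kernel (_ : u + y%:R + D%:R + g = u + g + D%:R + y%:R); last by ring.
rewrite (_ : u + y%:R + g = u + g + y%:R); last by ring.
have pochC : poch (u + g) y * poch (u + g + y%:R) k = poch (u + g) k * poch (u + g + k%:R) y.
  by rewrite -!pochD addnC.
transitivity ('C(M, y)%:R * (-1) ^+ y * poch (u + g + D%:R + y%:R) (M - y)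
  * (poch (u + g) y * poch (u + g + y%:R) k)); first by ring.
by rewrite pochC; ring.
Qed.

Lemma vdm_op_lin M D g c f h u :
  vdm_op M D g (fun v => c * f v + h v) u = c * vdm_op M D g f u + vdm_op M D g h u.
Proof. by rewrite /vdm_op mulr_sumr -big_split; apply: eq_bigr => y _ /=; ring. Qed.

End VandermondeOperator.

Section PolynomialFunctions.
Context {F : comNzRingType}.
Implicit Types (f h : F -> F) (g c : F).

Definition deg_lt (s : nat) f := exists2 Q : {poly F}, (size Q <= s)%N & f =1 horner Q.

Lemma deg_lt_eq {s f h} : f =1 h -> deg_lt s f -> deg_lt s h.
Proof. by move=> fh [Q sQ fQ]; exists Q => // u; rewrite -fh. Qed.

Lemma deg_lt_widen {s s' f} : (s <= s')%N -> deg_lt s f -> deg_lt s' f.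
Proof. by move=> ss' [Q sQ fQ]; exists Q => //; apply: leq_trans ss'. Qed.

Lemma deg_lt_lin {s} c {f h} :
  deg_lt s f -> deg_lt s h -> deg_lt s (fun u => c * f u + h u).
Proof.
move=> [Q sQ fQ] [P sP hP]; exists (c *: Q + P) => [|u]; last first.
  by rewrite hornerD hornerZ fQ hP.
rewrite (leq_trans (size_add _ _)) // geq_max sP andbT.
exact: leq_trans (size_scale_leq _ _) sQ.
Qed.

Lemma deg_lt0 {f} : deg_lt 0 f -> forall u, f u = 0.
Proof. by move=> [Q]; rewrite leqn0 size_poly_eq0 => /eqP-> fQ u; rewrite fQ horner0. Qed.

Definition pochP g k : {poly F} := \prod_(j < k) ('X - (- (g + j%:R))%:P).

Lemma horner_pochP g k u : (pochP g k).[u] = poch (u + g) k.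
Proof.
rewrite horner_prod; apply: eq_bigr => j _.
by rewrite hornerXsubC opprK addrA.
Qed.

Lemma size_pochP g k : size (pochP g k) = k.+1.
Proof. by rewrite size_prod_XsubC /index_enum unlock -enumT -cardT card_ord. Qed.

Lemma deg_lt_poch g k : deg_lt k.+1 (fun u => poch (u + g) k).
Proof. by exists (pochP g k) => [|u]; rewrite ?size_pochP ?horner_pochP. Qed.

Lemma deg_lt_pochS g {s f} :
  deg_lt s.+1 f -> exists c, deg_lt s (fun u => f u - c * poch (u + g) s).
Proof.
move=> [Q sQ fQ]; exists Q`_s, (Q - Q`_s *: pochP g s) => [|u]; last first.
  by rewrite hornerD hornerN hornerZ fQ horner_pochP.
have lead1 : (pochP g s)`_s = 1.
  by have := monic_prod_XsubC (index_enum 'I_s) predT (fun j => - (g + j%:R));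
    rewrite monicE lead_coefE -/(pochP g s) size_pochP => /eqP.
apply/leq_sizeP => j; rewrite leq_eqVlt coefB coefZ => /orP[/eqP <-|sj].
  by rewrite lead1 mulr1 subrr.
move/leq_sizeP: sQ => /(_ j sj) ->.
have /leq_sizeP/(_ j sj) -> : (size (pochP g s) <= s.+1)%N by rewrite size_pochP.
by rewrite mulr0 subrr.
Qed.

(* Expanding f in the basis (X + g)_k, the components with D <= k < D + M are
   killed by the eigenvalue (D - k)_M and those with k < D keep degree < D. *)
Lemma deg_lt_vdm_op M D g s f :
  (s <= D + M)%N -> deg_lt s f -> deg_lt D (vdm_op M D g f).
Proof.
elim: s f => [|s IH] f sDM fs.
  exists 0 => [|u]; first by rewrite size_poly0.
  by rewrite horner0 /vdm_op big1 // => y _; rewrite (deg_lt0 fs) mulr0.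
have [c fc] := deg_lt_pochS g fs.
have {}fc := IH _ (ltnW sDM) fc.
have opE u : vdm_op M D g f u = c * poch (D%:R - s%:R) M * poch (u + g) s
    + vdm_op M D g (fun v => f v - c * poch (v + g) s) u.
  rewrite -mulrA -vdm_op_poch -vdm_op_lin.
  by apply: eq_bigr => y _; congr (_ * _); ring.
have [sD|Ds] := ltnP s D.
  apply: (deg_lt_eq (fun u => esym (opE u))); apply: deg_lt_lin _ fc.
  exact: deg_lt_widen (deg_lt_poch g s).
apply: deg_lt_eq fc => u; rewrite opE (@poch_eq0 _ _ M (s - D)) ?mulr0 ?mul0r ?add0r //.
  by rewrite ltn_subLR // addnC.
by rewrite natrB //; ring.
Qed.

End PolynomialFunctions.

Section MultiIndices.
Context {N : nat} {l : 'I_N -> nat}.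
Implicit Types (u v w : 'I_N -> nat) (x y z n m : mindex l).

Definition psum_diff u v (k : nat) : nat := (\sum_(q < N | q < k) (u q - v q))%N.

Definition same_prefix (k : nat) z x : bool := [forall q : 'I_N, (q < k)%N ==> (x q == z q)].

Definition set_coord z (p : 'I_N) (j : 'I_(tot l).+1) : mindex l :=
  [ffun q => if q == p then j else z q].

Lemma psum_diff0 u v : psum_diff u v 0 = 0%N.
Proof. by rewrite /psum_diff big_pred0. Qed.

Lemma psum_diffS u v (p : 'I_N) : psum_diff u v p.+1 = (psum_diff u v p + (u p - v p))%N.
Proof.
rewrite /psum_diff (bigD1 p) //= addnC; congr (_ + _).
by apply: eq_bigl => q; rewrite ltnS -val_eqE /= andbC -ltn_neqAle.
Qed.

Lemma psum_diff_le {u w} v k : (forall q, u q <= w q)%N -> (psum_diff u v k <= psum_diff w v k)%N.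
Proof. by move=> uw; apply: leq_sum => q _; apply: leq_sub2r. Qed.

Lemma psum_lt_diff {u v} (p : 'I_N) :
  (forall q, v q <= u q)%N -> psum_lt u p = (psum_diff u v p + psum_lt v p)%N.
Proof. by move=> vu; rewrite /psum_lt -big_split; apply: eq_bigr => q _; rewrite /= subnK. Qed.

Lemma msize_diff {u v} : (forall q, v q <= u q)%N -> msize u = (psum_diff u v N + msize v)%N.
Proof.
move=> vu; have -> : psum_diff u v N = (\sum_(q < N) (u q - v q))%N.
  by apply: eq_bigl => q; rewrite ltn_ord.
by rewrite /msize -big_split; apply: eq_bigr => q _; rewrite /= subnK.
Qed.

Lemma psum_leE u (p : 'I_N) : psum_le u p = (psum_lt u p + u p)%N.
Proof.
rewrite /psum_le (bigD1 p) //= addnC; congr (_ + _).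
by apply: eq_bigl => q; rewrite ltn_neqAle -val_eqE /= andbC.
Qed.

Lemma psum_diff_prefix {k z x} v : same_prefix k z x -> psum_diff (mi x) v k = psum_diff (mi z) v k.
Proof. by move/forallP=> zx; apply: eq_bigr => q qk; rewrite /mi (eqP (implyP (zx q) qk)). Qed.

Lemma same_prefix_set (p : 'I_N) z x j :
  same_prefix p.+1 (set_coord z p j) x = same_prefix p z x && (x p == j).
Proof.
apply/forallP/andP => [zx|[/forallP zx /eqP xj] q].
  split; last by have := implyP (zx p) (ltnSn p); rewrite ffunE eqxx.
  apply/forallP => q; apply/implyP => qp.
  have := implyP (zx q) (ltnW qp).
  by rewrite ffunE (_ : (q == p) = false) // -val_eqE /= ltn_eqF.
apply/implyP; rewrite ltnS ffunE leq_eqVlt => /orP[/eqP/val_inj-> | qp].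
  by rewrite eqxx xj.
by rewrite (_ : (q == p) = false) ?(implyP (zx q) qp) // -val_eqE /= ltn_eqF.
Qed.

Lemma set_coordE z p j q : mi (set_coord z p j) q = if q == p then val j else mi z q.
Proof. by rewrite /mi ffunE; case: eqP. Qed.

Lemma same_prefix_set_coord (p : 'I_N) z j : same_prefix p z (set_coord z p j).
Proof.
apply/forallP => q; apply/implyP => qp.
by rewrite ffunE (_ : (q == p) = false) // -val_eqE /= ltn_eqF.
Qed.

Lemma inboxP x y : reflect (forall p, mi x p <= mi y p <= l p)%N (inbox x y).
Proof. exact: forallP. Qed.

Lemma inbox_between x y n : inbox n x ->
  (inbox n y && inbox y x) = [forall p, mi n p <= mi y p <= mi x p]%N.
Proof.
move/inboxP => nx; apply/andP/forallP => [[/inboxP ny /inboxP yx] p | nyx].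
  by move: (ny p) (yx p); lia.
by split; apply/inboxP => p; move: (nyx p) (nx p); lia.
Qed.

Lemma inbox_trans {x y z} : inbox x y -> inbox y z -> inbox x z.
Proof. by move=> /inboxP xy /inboxP yz; apply/inboxP => p; move: (xy p) (yz p); lia. Qed.

Lemma inbox_anti {x y} : inbox x y -> inbox y x -> x = y.
Proof.
move=> /inboxP xy /inboxP yx; apply/ffunP => p; apply: val_inj => /=.
by move: (xy p) (yx p); rewrite /mi; lia.
Qed.

Lemma mzeroE p : mi (mzero l) p = 0%N.
Proof. by rewrite /mi ffunE. Qed.

Lemma inbox_lo {x y} : inbox x y -> inbox (mzero l) x.
Proof. by move=> /inboxP xy; apply/inboxP => p; rewrite mzeroE; move: (xy p); lia. Qed.

Lemma inbox_hi {x y} : inbox x y -> inbox (mzero l) y.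
Proof. by move=> /inboxP xy; apply/inboxP => p; rewrite mzeroE; move: (xy p); lia. Qed.

Lemma inbox_refl x : inbox x x = inbox (mzero l) x.
Proof. by apply/inboxP/inboxP => xx p; move: (xx p); rewrite mzeroE; lia. Qed.

Lemma msize_le_tot {x y} : inbox x y -> (msize (mi y) <= tot l)%N.
Proof. by move/inboxP => xy; apply: leq_sum => p _; case/andP: (xy p). Qed.

Lemma psum_diff_eq0 x y : inbox x y -> (psum_diff (mi y) (mi x) N == 0)%N = (y == x).
Proof.
move/inboxP => xy; rewrite sum_nat_eq0; apply/forallP/eqP => [yx|-> p]; last first.
  by rewrite subnn implybT.
apply/ffunP => p; apply: val_inj => /=; move: (implyP (yx p) (ltn_ord p)) (xy p).
by rewrite /mi; lia.
Qed.

End MultiIndices.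

Lemma sum_ord_window {V : nmodType} (K a b : nat) (h : nat -> V) :
  (a <= b < K)%N ->
  \sum_(j < K | (a <= j <= b)%N) h (j - a)%N = \sum_(y < (b - a).+1) h y.
Proof.
move=> /andP[ab bK]; rewrite -(big_mkord (fun j => a <= j <= b)%N (fun j => h (j - a)%N)).
rewrite (eq_bigl (fun j => (a <= j) && (j < b.+1))%N) // -big_nat_widen //.
rewrite (eq_bigl (fun j => true && (a <= j))%N) // -big_nat_widenl //.
rewrite -{1}[a]add0n big_addn -subSn // big_mkord.
by apply: eq_bigr => y _; rewrite addnK.
Qed.

Section BoxSum.
Context {F : comNzRingType} {N : nat} {l : 'I_N -> nat}.
Variables (G : 'I_N -> F) (n m : mindex l) (P : F -> F).
Hypothesis nm : inbox n m.

(* The coordinate-p factor of Cbar_{m,x} C_{x,n} once binomials and a global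
   Pochhammer ratio are taken out (see [coefCbar_coefC_weight]). *)
Definition weight (x : mindex l) (p : 'I_N) : F :=
  vdm_kernel (mi m p - mi n p) (psum_diff (mi m) (mi n) p) (G p)
    (psum_diff (mi x) (mi n) p)%:R (mi x p - mi n p).

Definition tail_sum (k : nat) (z : mindex l) : F :=
  \sum_(x | inbox n x && inbox x m && same_prefix k z x)
    (\prod_(p < N | (k <= p)%N) weight x p) * P (psum_diff (mi x) (mi n) N)%:R.

Definition tail_sum_poly (k : nat) : Prop :=
  exists2 Q, deg_lt (psum_diff (mi m) (mi n) k) Q &
    forall z : mindex l, (forall q : 'I_N, q < k -> mi n q <= mi z q <= mi m q)%N ->
      tail_sum k z = Q (psum_diff (mi z) (mi n) k)%:R.

Lemma weight_set_coord {p : 'I_N} {x z : mindex l} {j} :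
  same_prefix p z x -> x p = j -> weight x p = weight (set_coord z p j) p.
Proof.
move=> zx xp; rewrite /weight (psum_diff_prefix _ zx).
by rewrite (psum_diff_prefix _ (same_prefix_set_coord _ _ _)) set_coordE eqxx /mi xp.
Qed.

Lemma tail_sum_split (p : 'I_N) z :
  tail_sum p z = \sum_(j : 'I_(tot l).+1 | (mi n p <= j <= mi m p)%N)
    weight (set_coord z p j) p * tail_sum p.+1 (set_coord z p j).
Proof.
rewrite /tail_sum (partition_big (fun x : mindex l => x p) (fun j => mi n p <= j <= mi m p)%N).
  apply: eq_bigr => j _; rewrite mulr_sumr; apply: eq_big => [x|x].
    by rewrite (same_prefix_set p z x j) andbA.
  move=> /andP[/andP[_ zx] /eqP xp].
  rewrite (bigD1 p) //= mulrA (weight_set_coord zx xp); congr (_ * _ * _).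
  by apply: eq_bigl => q; rewrite ltn_neqAle -val_eqE /= andbC eq_sym.
by move=> x /andP[]; rewrite inbox_between // => /forallP/(_ p).
Qed.

Lemma tail_sum_polyN : deg_lt (psum_diff (mi m) (mi n) N) P -> tail_sum_poly N.
Proof.
move=> degP; exists P => // z zbox; rewrite /tail_sum (big_pred1 z) => [|x].
  by rewrite big_pred0 ?mul1r // => p; rewrite leqNgt ltn_ord.
have -> : same_prefix N z x = (x == z).
  apply/forallP/eqP => [zx|->]; last by move=> q; rewrite eqxx implybT.
  by apply/ffunP => p; apply/eqP; exact: implyP (zx p) (ltn_ord p).
rewrite /= andbC; have [->|] //= := eqVneq x z.
by rewrite inbox_between //; apply/forallP => p; apply: zbox.
Qed.

Lemma tail_sum_polyS (p : 'I_N) : tail_sum_poly p.+1 -> tail_sum_poly p.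
Proof.
move=> [Q degQ QE].
exists (vdm_op (mi m p - mi n p) (psum_diff (mi m) (mi n) p) (G p) Q) => [|z zbox].
  by apply: deg_lt_vdm_op degQ; rewrite psum_diffS.
set u : F := (psum_diff (mi z) (mi n) p)%:R.
have /inboxP/(_ p)/andP[np mp] := nm.
rewrite tail_sum_split /vdm_op -(sum_ord_window (tot l).+1 (mi n p) (mi m p) (fun y =>
  vdm_kernel (mi m p - mi n p) (psum_diff (mi m) (mi n) p) (G p) u y * Q (u + y%:R))).
  apply: eq_bigr => j nmj; rewrite QE => [|q]; last first.
    rewrite ltnS leq_eqVlt set_coordE => /orP[/eqP/val_inj->|qp]; first by rewrite eqxx.
    by rewrite (_ : (q == p) = false) ?zbox // -val_eqE /= ltn_eqF.
  rewrite psum_diffS /weight !(psum_diff_prefix _ (same_prefix_set_coord _ _ _)).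
  by rewrite !set_coordE eqxx natrD.
by rewrite np ltnS (leq_trans mp) // /tot (bigD1 p) //= leq_addr.
Qed.

Lemma tail_sum_poly0 : deg_lt (psum_diff (mi m) (mi n) N) P -> tail_sum_poly 0.
Proof.
move=> degP; suff tail k : (k <= N)%N -> tail_sum_poly (N - k).
  by rewrite -(subnn N); apply: tail.
elim: k => [|i IH] iN; first by rewrite subn0; apply: tail_sum_polyN.
have kN : (N - i.+1 < N)%N by lia.
have := tail_sum_polyS (Ordinal kN); rewrite /= (_ : (N - i.+1).+1 = N - i)%N; last by lia.
by apply; apply: IH; apply: ltnW.
Qed.

(* Summing the coordinates out one by one, from the last to the first, each sum is a
   [vdm_op] lowering the degree bound by m_p - n_p; in total it drops to 0. *)
Lemma box_sum_weight_eq0 : deg_lt (psum_diff (mi m) (mi n) N) P ->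
  \sum_(x | inbox n x && inbox x m)
    (\prod_(p < N) weight x p) * P (psum_diff (mi x) (mi n) N)%:R = 0.
Proof.
move=> /tail_sum_poly0[Q]; rewrite psum_diff0 => /deg_lt0 Q0 QE.
transitivity (tail_sum 0 n); last by rewrite QE ?Q0 // => q; rewrite ltn0.
apply: eq_big => [x|x _]; first by rewrite (_ : same_prefix 0 n x) ?andbT //; apply/forallP.
by congr (_ * _); apply: eq_bigl.
Qed.

End BoxSum.

Lemma mul_bin_bin n x m : (n <= x <= m)%N ->
  ('C(m, x) * 'C(x, n) = 'C(m, n) * 'C(m - n, x - n))%N.
Proof.
move=> /andP[nx xm]; apply/eqP.
rewrite -(@eqn_pmul2r (n`! * (x - n)`! * (m - x)`!)) ?muln_gt0 ?fact_gt0 //; apply/eqP.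
have binmx := bin_fact (leq_sub2r n xm).
rewrite (_ : m - n - (x - n) = m - x)%N in binmx; last by lia.
transitivity ('C(m, x) * ('C(x, n) * (n`! * (x - n)`!)) * (m - x)`!)%N; first by ring.
rewrite bin_fact // -mulnA bin_fact // -(bin_fact (leq_trans nx xm)) -binmx; ring.
Qed.

Section Coefficients.
Context {R : realType} {N : nat} {l : 'I_N -> nat}.
Variables (a : 'I_N -> R[i]) (om : R[i]).
Implicit Types (x n m : mindex l).

Definition c_factor n x (p : 'I_N) : R[i] :=
  'C(mi n p, mi x p)%:R
  * poch ((psum_lt (mi n) p + psum_le (mi x) p + psum_ge l p)%:R + a p + om + 1)
         (mi n p - mi x p).

Definition cbar_factor x n (p : 'I_N) : R[i] :=
  'C(mi x p, mi n p)%:R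
  * poch ((psum_le (mi n) p + psum_lt (mi x) p + psum_ge l p)%:R + a p + om + 1)
         (mi x p - mi n p).

Lemma coefCE n x : Defs.coefC a om n x =
  (-1) ^+ (msize (mi n) - msize (mi x))
  / poch ((2 * msize (mi x))%:R + om + 1) (msize (mi n) - msize (mi x))
  * \prod_(p < N) c_factor n x p.
Proof. by []. Qed.

Lemma coefCbarE x n : coefCbar a om x n =
  1 / poch ((msize (mi n) + msize (mi x))%:R + om) (msize (mi x) - msize (mi n))
  * \prod_(p < N) cbar_factor x n p.
Proof. by []. Qed.

Definition gamma n (p : 'I_N) : R[i] :=
  (psum_le (mi n) p + psum_lt (mi n) p + psum_ge l p)%:R + a p + om + 1.

Lemma factor_weight n x m (p : 'I_N) :
  (forall q, mi n q <= mi x q <= mi m q)%N ->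
  cbar_factor m x p * c_factor x n p * (-1) ^+ (mi x p - mi n p)
  = 'C(mi m p, mi n p)%:R * weight (gamma n) n m x p.
Proof.
move=> nxm; have nx q : (mi n q <= mi x q)%N by case/andP: (nxm q).
have nm q : (mi n q <= mi m q)%N by case/andP: (nxm q) => /leq_trans; apply.
have /andP[nxp xmp] := nxm p.
set Y := psum_diff (mi x) (mi n) p; set D := psum_diff (mi m) (mi n) p.
have e1 : (psum_lt (mi x) p + psum_le (mi n) p + psum_ge l p
    = Y + (psum_le (mi n) p + psum_lt (mi n) p + psum_ge l p))%N.
  by rewrite (psum_lt_diff _ nx); lia.
have e2 : (psum_le (mi x) p + psum_lt (mi m) p + psum_ge l p
    = Y + (mi x p - mi n p) + D + (psum_le (mi n) p + psum_lt (mi n) p + psum_ge l p))%N.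
  by rewrite !psum_leE (psum_lt_diff _ nx) (psum_lt_diff _ nm) -/Y -/D; lia.
rewrite /cbar_factor /c_factor /weight /vdm_kernel /gamma e1 e2 -/Y -/D !natrD -!addrA.
rewrite (_ : mi m p - mi x p = mi m p - mi n p - (mi x p - mi n p))%N; last by lia.
have binE : 'C(mi m p, mi n p)%:R * 'C(mi m p - mi n p, mi x p - mi n p)%:R
    = 'C(mi m p, mi x p)%:R * 'C(mi x p, mi n p)%:R :> R[i].
  by rewrite -!natrM mul_bin_bin ?nxp.
by rewrite (mulrA ('C(mi m p, mi n p)%:R)) binE; ring.
Qed.

Lemma coefCbar_coefC_weight n x m :
  (forall q, mi n q <= mi x q <= mi m q)%N ->
  (0 < psum_diff (mi m) (mi n) N)%N ->
  poch ((2 * msize (mi n))%:R + om + 1) (2 * psum_diff (mi m) (mi n) N - 1) != 0 ->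
  coefCbar a om m x * Defs.coefC a om x n
  = (\prod_(p < N) 'C(mi m p, mi n p)%:R)
      / poch ((2 * msize (mi n))%:R + om + 1) (2 * psum_diff (mi m) (mi n) N - 1)
    * ((\prod_(p < N) weight (gamma n) n m x p)
       * poch ((psum_diff (mi x) (mi n) N)%:R + ((2 * msize (mi n))%:R + om + 1))
              (psum_diff (mi m) (mi n) N - 1)).
Proof.
move=> nxm M0; have nx q : (mi n q <= mi x q)%N by case/andP: (nxm q).
have xm q : (mi x q <= mi m q)%N by case/andP: (nxm q).
have nm q : (mi n q <= mi m q)%N := leq_trans (nx q) (xm q).
set M := psum_diff (mi m) (mi n) N in M0 *; set Y := psum_diff (mi x) (mi n) N.
set c := (2 * msize (mi n))%:R + om + 1.
have YM : (Y <= M)%N := psum_diff_le _ _ xm.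
set B := poch ((msize (mi x) + msize (mi m))%:R + om) (M - Y).
have -> : poch c (2 * M - 1) = poch c Y * poch (Y%:R + c) (M - 1) * B.
  rewrite (_ : 2 * M - 1 = Y + (M - 1) + (M - Y))%N; last by lia.
  rewrite !pochD (addrC c) /B (msize_diff nx) (msize_diff nm) -/Y -/M; congr (_ * poch _ _).
  rewrite (_ : Y + msize (mi n) + (M + msize (mi n)) = 2 * msize (mi n) + (Y + (M - 1)) + 1)%N.
    by rewrite /c !natrD; ring.
  by lia.
rewrite !mulf_eq0 !negb_or => /andP[/andP[A0 P0] B0].
have prodE : (\prod_(p < N) cbar_factor m x p) * (\prod_(p < N) c_factor x n p) * (-1) ^+ Y
    = (\prod_(p < N) 'C(mi m p, mi n p)%:R) * \prod_(p < N) weight (gamma n) n m x p.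
  rewrite (_ : (-1) ^+ Y = \prod_(p < N) (-1) ^+ (mi x p - mi n p)); last first.
    by rewrite prodrXr; congr (_ ^+ _); apply: eq_bigl => q; rewrite ltn_ord.
  by rewrite -!big_split; apply: eq_bigr => p _; apply: factor_weight.
rewrite coefCbarE coefCE (msize_diff nx) (msize_diff nm) -/Y -/M -/c.
rewrite (_ : M + msize (mi n) - (Y + msize (mi n)) = M - Y)%N; last by lia.
rewrite (_ : Y + msize (mi n) - msize (mi n) = Y)%N; last by lia.
rewrite -(msize_diff nx) -(msize_diff nm) -/B.
transitivity ((\prod_(p < N) cbar_factor m x p) * (\prod_(p < N) c_factor x n p) * (-1) ^+ Y
  / (poch c Y * B)); first by field; rewrite A0 B0.
by rewrite prodE; field; rewrite A0 P0 B0.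
Qed.

Lemma poch_denom_neq0 n m : ~ in_neg_range om (2 * tot l).-1 -> inbox n m ->
  poch ((2 * msize (mi n))%:R + om + 1) (2 * psum_diff (mi m) (mi n) N - 1) != 0.
Proof.
move=> om_ok nm; apply/prodf_neq0 => j _; apply/eqP => c0; apply: om_ok.
have nm' q : (mi n q <= mi m q)%N by move/inboxP: nm => /(_ q)/andP[].
have := msize_le_tot nm; rewrite (msize_diff nm') => mtot.
exists (2 * msize (mi n) + 1 + j)%N; first by have := ltn_ord j; lia.
by apply/eqP; rewrite -subr_eq0 opprK -c0 !natrD; apply/eqP; ring.
Qed.

Lemma coefCbar_coefC_diag n : coefCbar a om n n * Defs.coefC a om n n = 1.
Proof.
rewrite coefCbarE coefCE !subnn !poch0 expr0 !div1r invr1 !mul1r.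
by rewrite !big1 ?mulr1 // => p _; rewrite /cbar_factor /c_factor subnn poch0 binn mulr1.
Qed.

Lemma coefCbar_coefC_sum n m : ~ in_neg_range om (2 * tot l).-1 -> inbox n m ->
  \sum_(x | inbox n x && inbox x m) coefCbar a om m x * Defs.coefC a om x n = (m == n)%:R.
Proof.
move=> om_ok nm; have [emn|mn] := eqVneq m n.
  subst m; rewrite (big_pred1 n) ?coefCbar_coefC_diag // => x /=.
  by apply/andP/eqP => [[nx xn]|->]; [apply: inbox_anti | rewrite nm].
have M0 : (0 < psum_diff (mi m) (mi n) N)%N by rewrite lt0n psum_diff_eq0.
set M := psum_diff (mi m) (mi n) N in M0 *; set c := (2 * msize (mi n))%:R + om + 1.
pose P s := poch (s + c) (M - 1).
have degP : deg_lt M P by rewrite -{1}(prednK M0) -subn1; apply: deg_lt_poch.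
rewrite (eq_bigr (fun x => (\prod_(p < N) 'C(mi m p, mi n p)%:R) / poch c (2 * M - 1)
    * ((\prod_(p < N) weight (gamma n) n m x p) * P (psum_diff (mi x) (mi n) N)%:R)))
    => [|x nxm].
  by rewrite -mulr_sumr (box_sum_weight_eq0 _ _ _ P nm) ?mulr0.
apply: coefCbar_coefC_weight; rewrite ?poch_denom_neq0 //.
by apply/forallP; rewrite -inbox_between.
Qed.

End Coefficients.

Lemma mulmx1C_fun {F : comUnitRingType} {T : finType} {A B : T -> T -> F} :
  (forall m n, \sum_x B m x * A x n = (m == n)%:R) ->
  forall m n, \sum_x A m x * B x n = (m == n)%:R.
Proof.
move=> BA m n.
pose mx (f : T -> T -> F) : 'M_#|T| := \matrix_(i, j) f (enum_val i) (enum_val j).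
have mulE f g i j : (mx f *m mx g) i j = \sum_x f (enum_val i) x * g x (enum_val j).
  rewrite mxE [RHS](reindex (@enum_val T T)) /=; last first.
    by exists enum_rank => [k|x] _; rewrite ?enum_valK ?enum_rankK.
  by apply: eq_bigr => k _; rewrite !mxE.
have /matrixP/(_ (enum_rank m) (enum_rank n)) : mx A *m mx B = 1%:M.
  by apply: mulmx1C; apply/matrixP => i j; rewrite mulE BA mxE (inj_eq enum_val_inj).
by rewrite mulE !enum_rankK mxE (inj_eq enum_rank_inj).
Qed.

Section InverseChangeOfBasis.
Context {R : realType} {N : nat} {l : 'I_N -> nat}.
Variables (a : 'I_N -> R[i]) (om : R[i]).
Implicit Types (x n m : mindex l).

(* The triangular coefficient arrays, extended by the identity outside the admissible
   box 0 <= m <= l so that they become mutually inverse square matrices on [mindex l]. *)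
Definition coefC_mx m x : R[i] := if inbox x m then Defs.coefC a om m x else (m == x)%:R.
Definition coefCbar_mx m x : R[i] := if inbox x m then coefCbar a om m x else (m == x)%:R.

Lemma if_inbox_id (c : R[i]) m x : inbox (mzero l) m || inbox (mzero l) x ->
  (if inbox x m then c else (m == x)%:R) = if inbox x m then c else 0.
Proof.
move=> m0; case: ifP => // xm; have [emx|//] := eqVneq m x.
by move: m0 xm; rewrite emx orbb -inbox_refl => ->.
Qed.

Lemma coefCbar_mx_coefC_mx : ~ in_neg_range om (2 * tot l).-1 ->
  forall m n, \sum_x coefCbar_mx m x * coefC_mx x n = (m == n)%:R.
Proof.
move=> om_ok m n; have [m0|m0] := boolP (inbox (mzero l) m); last first.
  rewrite (bigD1 m) //= /coefCbar_mx /coefC_mx.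
  have xm0 x : inbox x m = false by apply: contraNF m0 => /inbox_hi.
  rewrite !xm0 eqxx mul1r big1 ?addr0 // => x; rewrite xm0 eq_sym => /negbTE->.
  by rewrite mul0r.
rewrite (eq_bigr (fun x => if inbox x m then coefCbar a om m x * coefC_mx x n else 0));
  last by move=> x _; rewrite /coefCbar_mx if_inbox_id ?m0 //; case: ifP; rewrite ?mul0r.
rewrite -big_mkcond (eq_bigr (fun x =>
    if inbox n x then coefCbar a om m x * Defs.coefC a om x n else 0)) => [|x xm]; last first.
  by rewrite /coefC_mx if_inbox_id ?(inbox_lo xm) //; case: ifP; rewrite ?mulr0.
rewrite -big_mkcondr (eq_bigl (fun x => inbox n x && inbox x m)) => [|x]; last exact: andbC.
have [nm|nm] := boolP (inbox n m); first exact: coefCbar_coefC_sum.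
rewrite big_pred0 => [|x]; last by apply: contraNF nm => /andP[]; apply: inbox_trans.
by have [emn|//] := eqVneq m n; rewrite emn inbox_refl -emn m0 in nm.
Qed.

Lemma VxE x m : Vx a om x m = if inbox x m then Defs.coefC a om m x else 0.
Proof.
rewrite /Vx sum_ffunE (eq_bigr (fun y => Defs.coefC a om y x * (m == y)%:R)) => [|y _];
  last by rewrite ffunE /basisV ffunE.
case: ifP => xm.
  rewrite (bigD1 m) //= eqxx mulr1 big1 ?addr0 // => y /andP[_ ym].
  by rewrite eq_sym (negbTE ym) mulr0.
rewrite big1 // => y xy; have [emy|] := eqVneq m y; last by rewrite mulr0.
by move: xm; rewrite emy xy.
Qed.

End InverseChangeOfBasis.

Theorem mainTheorem3 (R : realType) (N : nat) (l : 'I_N -> nat)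
    (th0 th0s h hs om oms : R[i]) (a : 'I_N -> R[i]) :
  standing l th0 th0s h hs om oms a ->
  forall n : mindex l, inbox (mzero l) n ->
    basisV n = \sum_(x : mindex l | inbox n x) coefCbar a om x n *: Vx a om x.
Proof.
move=> [_ [_ [_ [om_ok _]]]] n n0; apply/ffunP => m.
rewrite {1}/basisV ffunE -(mulmx1C_fun (coefCbar_mx_coefC_mx a om om_ok)).
rewrite sum_ffunE [RHS]big_mkcond; apply: eq_bigr => x _.
rewrite /coefCbar_mx if_inbox_id ?n0 ?orbT //; case: ifP => nx; last by rewrite mulr0.
by rewrite ffunE VxE /coefC_mx if_inbox_id ?(inbox_hi nx) ?orbT // mulrC.
Qed.
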